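(* Let $H$ and $G$ be bipartite graphs with vertex classes $\tilde U\dot\cup\tilde V$ and $U\dot\cup V$ respectively, such that $\deg_H(\tilde v)\le\Delta$ for all $\tilde v\in\tilde V$, and let $f,f':\tilde V\to V$ be injective functions with switching distance $\mathrm{sw}(f,f')\le s$. Then the neighbourhood distance of the candidate graphs satisfies $\mathrm{nd}_{\tilde U}(B_f(H,G),B_{f'}(H,G))\le 2s\Delta$.
   Context: For an injective $f:\tilde V\to V$, a vertex $u\in U$ is an $f$-candidate for $\tilde u\in\tilde U$ if $f(N_H(\tilde u))\subseteq N_G(u)$; the candidate graph $B_f(H,G)$ is the bipartite graph on $\tilde U\dot\cup U$ whose edges are the pairs $\tilde uu$ with $u$ an $f$-candidate for $\tilde u$. An injective $f'$ is obtained from an injective $f$ by a switching if there are $a,b$ in the domain with $f'(a)=f(b)$, $f'(b)=f(a)$ and $f'(w)=f(w)$ for all $w\notin\{a,b\}$; $\mathrm{sw}(f,f')\le s$ means $f'$ is obtainable from $f$ by a sequence of at most $s$ switchings. For bipartite graphs $B,B'$ on the same vertex set $\tilde U\dot\cup U$, $\mathrm{nd}_{\tilde U}(B,B')$ is the number of $\tilde u\in\tilde U$ with $N_B(\tilde u)\ne N_{B'}(\tilde u)$. *)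

From mathcomp Require Import all_boot.
Set Implicit Arguments. Unset Strict Implicit. Unset Printing Implicit Defensive.

(* A bipartite graph with vertex classes A (dot-union) B is given by its
   edge relation e : A -> B -> bool (edges only go between the classes). *)

Section Defs.
Variables (Ut Vt U V : finType).

Definition nbhdL (A B : finType) (e : A -> B -> bool) (a : A) : {set B} :=
  [set b | e a b].
Definition nbhdR (A B : finType) (e : A -> B -> bool) (b : B) : {set A} :=
  [set a | e a b].

Definition switch (g : Vt -> V) (a b : Vt) : Vt -> V :=
  fun w => if w == a then g b else if w == b then g a else g w.

Definition sw_le (f f' : Vt -> V) (s : nat) : Prop :=
  exists ss : seq (Vt * Vt),
    size ss <= s /\ f' =1 foldl (fun g p => switch g p.1 p.2) f ss.

Definition candidate (eH : Ut -> Vt -> bool) (eG : U -> V -> bool)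
    (f : Vt -> V) : Ut -> U -> bool :=
  fun ut u => (f @: nbhdL eH ut) \subset nbhdL eG u.

Definition nd (B B' : Ut -> U -> bool) : nat :=
  #|[set ut | nbhdL B ut != nbhdL B' ut]|.
End Defs.

From mathcomp Require Import all_boot.

Set Implicit Arguments.
Unset Strict Implicit.
Unset Printing Implicit Defensive.

(* A vertex ut can change its candidate neighbourhood only if f and f' differ
   somewhere on N_H(ut), i.e. ut is an H-neighbour of one of the at most 2s
   vertices moved by the switchings; each of these has at most Delta
   neighbours in Ut. *)

Lemma leq_card_bigcup (I T : finType) (X : {set I}) (F : I -> {set T}) :
  #|\bigcup_(i in X) F i| <= \sum_(i in X) #|F i|.
Proof.
apply: (big_ind2 (fun (A : {set T}) n => #|A| <= n)) => [|A a B b hA hB|//].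
- by rewrite cards0.
- exact: leq_trans (leq_card_setU A B) (leq_add hA hB).
Qed.

Section Switching.
Variables (Vt V : finType).

Definition switches (f : Vt -> V) (ss : seq (Vt * Vt)) : Vt -> V :=
  foldl (fun g p => switch g p.1 p.2) f ss.

Lemma switch_diff_subset (g : Vt -> V) (a b : Vt) :
  [set w | g w != switch g a b w] \subset [set a; b].
Proof.
apply/subsetP => w; rewrite !inE /switch.
by case: (w == a) => //; case: (w == b); rewrite ?eqxx.
Qed.

Lemma card_switches_diff (f : Vt -> V) (ss : seq (Vt * Vt)) :
  #|[set w | f w != switches f ss w]| <= 2 * size ss.
Proof.
elim/last_ind: ss => [|ss p IH].
  by rewrite leqn0 cards_eq0; apply/eqP/setP => w; rewrite !inE eqxx.
rewrite /switches foldl_rcons -/(switches f ss) size_rcons mulnS addnC.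
set g := switches f ss.
have sub : [set w | f w != switch g p.1 p.2 w]
    \subset [set w | f w != g w] :|: [set w | g w != switch g p.1 p.2 w].
  apply/subsetP => w; rewrite !inE.
  by case: (f w =P g w) => [->|].
apply: leq_trans (subset_leq_card sub) _.
apply: leq_trans (leq_card_setU _ _) (leq_add IH _).
apply: leq_trans (subset_leq_card (switch_diff_subset g p.1 p.2)) _.
by rewrite cards2; case: (_ != _).
Qed.

Lemma sw_le_card_diff (f f' : Vt -> V) (s : nat) :
  sw_le f f' s -> #|[set w | f w != f' w]| <= 2 * s.
Proof.
case=> ss [hs f'E].
have -> : [set w | f w != f' w] = [set w | f w != switches f ss w].
  by apply/setP => w; rewrite !inE f'E.
apply: leq_trans (card_switches_diff f ss) _.
by rewrite leq_mul2l hs orbT.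
Qed.

End Switching.

Lemma candidate_changed_sub_bigcup (Ut Vt U V : finType)
    (eH : Ut -> Vt -> bool) (eG : U -> V -> bool) (f f' : Vt -> V) :
  [set ut | nbhdL (candidate eH eG f) ut != nbhdL (candidate eH eG f') ut]
    \subset \bigcup_(w in [set w | f w != f' w]) nbhdR eH w.
Proof.
apply/subsetP => ut; rewrite inE; apply: contraR => /bigcupP not_moved.
suff same_image : f @: nbhdL eH ut = f' @: nbhdL eH ut.
  by rewrite /nbhdL /candidate same_image.
apply: eq_in_imset => w; rewrite inE => hw.
by apply/eqP/negPn/negP => moved; apply: not_moved; exists w; rewrite !inE.
Qed.

Theorem lemma11p4 (Ut Vt U V : finType)
    (eH : Ut -> Vt -> bool) (eG : U -> V -> bool) (Delta s : nat)
    (hdeg : forall vt : Vt, #|nbhdR eH vt| <= Delta)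
    (f f' : Vt -> V) (hf : injective f) (hf' : injective f')
    (hsw : sw_le f f' s) :
  nd (candidate eH eG f) (candidate eH eG f') <= 2 * s * Delta.
Proof.
set X := [set w | f w != f' w].
rewrite /nd.
apply: leq_trans (subset_leq_card (candidate_changed_sub_bigcup eH eG f f')) _.
apply: leq_trans (leq_card_bigcup _ _) _.
apply: leq_trans (_ : _ <= \sum_(w in X) Delta) _; first exact: leq_sum.
by rewrite sum_nat_const leq_mul2r (sw_le_card_diff hsw) orbT.
Qed.
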